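(* Let $G$ be a finite GVZ-group with $|\mathrm{cd}(G)|=2$. Let $N$ be a normal subgroup of $G$ and $\chi\in\mathrm{nl}(G)$ such that $G'\not\subseteq N$ and $[Z(\chi),G]\subseteq N$. Then $N\subseteq Z(\chi)$.
   Context: All groups are finite. $\mathrm{Irr}(G)$ is the set of complex irreducible characters of $G$, $\mathrm{nl}(G)$ the set of non-linear irreducible characters, and $\mathrm{cd}(G)=\{\chi(1):\chi\in\mathrm{Irr}(G)\}$. For a character $\chi$, $Z(\chi)=\{g\in G: |\chi(g)|=\chi(1)\}$. A nonabelian group $G$ is a GVZ-group if for every $\chi\in\mathrm{Irr}(G)$ we have $\chi(g)=0$ for all $g\in G\setminus Z(\chi)$. *)

From mathcomp Require Import all_boot all_order all_algebra all_fingroup all_solvable all_field all_character.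
Set Implicit Arguments. Unset Strict Implicit. Unset Printing Implicit Defensive.
Import GroupScope GRing.Theory Num.Theory.
Local Open Scope ring_scope.

Definition cd (gT : finGroupType) (G : {group gT}) : seq algC :=
  undup [seq 'chi[G]_i 1%g | i <- enum (Iirr G)].

Definition nonlinear_irr (gT : finGroupType) (G : {group gT}) (i : Iirr G) : bool :=
  'chi[G]_i 1%g != 1.

Definition GVZ (gT : finGroupType) (G : {group gT}) : Prop :=
  ~~ abelian G /\
  forall (i : Iirr G) (g : gT), g \in G -> g \notin ('Z('chi[G]_i))%CF -> 'chi[G]_i g = 0.

From mathcomp Require Import all_boot all_order all_algebra all_fingroup all_solvable all_field all_character.

Set Implicit Arguments.
Unset Strict Implicit.
Unset Printing Implicit Defensive.

Import GroupScope GRing.Theory Num.Theory.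
Local Open Scope ring_scope.

(* Since G' is not in N, some nonlinear chi_j has N in its kernel, and then
   [Z(chi), G] <= N <= ker chi_j puts Z(chi) inside Z(chi_j).  As |cd(G)| = 2,
   chi and chi_j have the same degree, and in a GVZ-group chi(1)^2 = |G : Z(chi)|,
   so Z(chi) = Z(chi_j), which contains ker chi_j and hence N. *)

Section IrrCenters.

Variables (gT : finGroupType) (G : {group gT}).

Lemma irr1_sqr_eq_index_cfcenter (i : Iirr G) :
    {in G, forall g, g \notin 'Z('chi_i)%CF -> 'chi_i g = 0} ->
  'chi_i 1%g ^+ 2 = #|G : 'Z('chi_i)%CF|%:R.
Proof.
move=> vanish_i; apply/eqP; rewrite (irr1_bound i).
apply/cfun_onP => g notZg; have [Gg | notGg] := boolP (g \in G).
  exact: vanish_i.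
exact: cfun0.
Qed.

Lemma exists_nonlinear_irr_cfker (N : {group gT}) :
  N <| G -> ~~ (G^`(1) \subset N)%g ->
  exists2 j : Iirr G, N \subset cfker 'chi_j & nonlinear_irr j.
Proof.
move=> nsNG not_sG'N.
suff /existsP[j /andP[sNkerj nlj]] :
    [exists j : Iirr G, (N \subset cfker 'chi_j) && nonlinear_irr j] by exists j.
apply: contraR not_sG'N => /existsPn no_nonlinear.
rewrite -(cap_cfker_normal nsNG); apply/bigcapsP => j sNkerj.
have := no_nonlinear j; rewrite sNkerj /nonlinear_irr negbK => lin_j.
by rewrite -lin_irr_der1 qualifE /= irr_char.
Qed.

Lemma cd_size2_irr1_eq (i j : Iirr G) :
  size (cd G) = 2%N -> nonlinear_irr i -> nonlinear_irr j ->
  'chi_i 1%g = 'chi_j 1%g.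
Proof.
rewrite /nonlinear_irr => cd2 nli nlj; apply/eqP; apply: contraT => neq_ij.
have irr1_cd k : 'chi[G]_k 1%g \in cd G.
  by rewrite mem_undup; apply/mapP; exists k; rewrite ?mem_enum.
have: (size [:: 1%R; 'chi_i 1%g; 'chi_j 1%g] <= size (cd G))%N.
  apply: uniq_leq_size => [|x].
    by rewrite /= !inE negb_or neq_ij !(eq_sym 1) nli nlj.
  rewrite !inE => /or3P[] /eqP ->; rewrite ?irr1_cd //.
  by rewrite -(cfun11 G) -irr0 irr1_cd.
by rewrite cd2.
Qed.

Lemma commg_sub_cfker_cfcenter (H : {group gT}) (j : Iirr G) :
  H \subset G -> [~: H, G] \subset cfker 'chi_j -> H \subset 'Z('chi_j)%CF.
Proof.
move=> sHG sHGker; have nsKZ := cfker_center_normal 'chi_j.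
have nKG : G \subset 'N(cfker 'chi_j) := normal_norm (cfker_normal _).
rewrite -(quotientSGK _ (normal_sub nsKZ)); last exact: subset_trans sHG nKG.
by rewrite cfcenter_eq_center subsetI quotientS ?quotient_cents2r.
Qed.

Lemma cfcenter_eq_of_irr1_eq (i j : Iirr G) :
    {in G, forall g, g \notin 'Z('chi_i)%CF -> 'chi_i g = 0} ->
    {in G, forall g, g \notin 'Z('chi_j)%CF -> 'chi_j g = 0} ->
    'chi_i 1%g = 'chi_j 1%g ->
  'Z('chi_i)%CF \subset 'Z('chi_j)%CF -> 'Z('chi_i)%CF = 'Z('chi_j)%CF.
Proof.
move=> vanish_i vanish_j eq_deg sZij.
have /eqP: #|G : 'Z('chi_i)%CF|%:R = #|G : 'Z('chi_j)%CF|%:R :> algC.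
  by rewrite -(irr1_sqr_eq_index_cfcenter vanish_i) -(irr1_sqr_eq_index_cfcenter vanish_j) eq_deg.
rewrite eqr_nat -(Lagrange_index (cfcenter_sub _) sZij) -{2}[#|G : _|]muln1.
rewrite eqn_pmul2l ?indexg_gt0 // indexg_eq1 => sZji.
by apply/eqP; rewrite eqEsubset sZij.
Qed.

End IrrCenters.

Theorem mainTheorem7 (gT : finGroupType) (G N : {group gT}) (i : Iirr G) :
  GVZ G -> size (cd G) = 2%N ->
  N <| G -> nonlinear_irr i ->
  ~~ (G^`(1) \subset N)%g ->
  ([~: ('Z('chi[G]_i))%CF, G] \subset N)%g ->
  (N \subset ('Z('chi[G]_i))%CF)%g.
Proof.
move=> gvzG cd2 nsNG nli not_sG'N sZGN.
have [j sNkerj nlj] := exists_nonlinear_irr_cfker nsNG not_sG'N.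
have sZij : 'Z('chi_i)%CF \subset 'Z('chi_j)%CF.
  exact: commg_sub_cfker_cfcenter (cfcenter_sub _) (subset_trans sZGN sNkerj).
have [_ gvz] := gvzG.
rewrite (cfcenter_eq_of_irr1_eq (gvz i) (gvz j) (cd_size2_irr1_eq cd2 nli nlj) sZij).
exact: subset_trans sNkerj (normal_sub (cfker_center_normal _)).
Qed.
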